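(* Let $K$ be a field of characteristic $0$, let $E$ be the infinite-dimensional unitary Grassmann algebra over $K$ with even part $E_0$, let $A=\begin{pmatrix} E_0 & E\\ 0 & E\end{pmatrix}$, and let $F_n(A)=K\langle x_1,\dots,x_n\rangle/(K\langle x_1,\dots,x_n\rangle\cap T(A))$. Let $n\geq 2$ be even and $m\geq n+2$. Then the polynomial \[f_{m,n+1}^{(3)}=\sum_{\sigma\in S_{n+1}}(-1)^{\sigma}[x_{\sigma(1)},x_1,\dots,x_1][x_{\sigma(2)},x_{\sigma(3)}]\cdots[x_{\sigma(n)},x_{\sigma(n+1)}],\] where each first factor is the left-normed commutator of length $m-n$ consisting of $x_{\sigma(1)}$ followed by $m-n-1$ copies of $x_1$, is not a polynomial identity of $F_n(A)$.
   Context: All algebras are associative and unitary over $K$; $T(A)$ is the ideal of polynomial identities of $A$. $E$ is generated by anticommuting $e_1,e_2,\dots$ and $E_0$ is the span of basis products of even length. Commutators: $[a,b]=ab-ba$, $[a_1,\dots,a_k]=[[a_1,\dots,a_{k-1}],a_k]$; $(-1)^\sigma$ is the sign of $\sigma$. The polynomial has total degree $m$. *)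

From mathcomp Require Import all_boot all_order all_algebra all_fingroup.
Set Implicit Arguments. Unset Strict Implicit. Unset Printing Implicit Defensive.
Import GRing.Theory.
Local Open Scope ring_scope.

Section Defs.
Variable K : fieldType.

(* An element of E is presented as a formal finite sum of pairs (c, w),
   meaning c * e_{w_1} e_{w_2} ... e_{w_k}  (w a word in the generators). *)
Definition grass := seq (K * seq nat).

Fixpoint ninv (w : seq nat) : nat :=
  if w is x :: s then (count (fun y => y < x)%N s + ninv s)%N else 0%N.

(* Coefficient of the basis element e_S (S strictly increasing) in x:
   e_{w_1}...e_{w_k} = 0 if w has a repeated letter, and otherwise equals
   (-1)^{inv w} e_{sort w}  (anticommutativity). *)
Definition gcoef (x : grass) (S : seq nat) : K :=
  \sum_(p <- x | uniq p.2 && (sort leq p.2 == S)) (-1) ^+ ninv p.2 * p.1.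

Definition gis0 (x : grass) : Prop := forall S, gcoef x S = 0.
Definition inE0 (x : grass) : Prop := forall S, odd (size S) -> gcoef x S = 0.

Definition gadd (x y : grass) : grass := x ++ y.
Definition gmul (x y : grass) : grass :=
  [seq (p.1 * q.1, p.2 ++ q.2) | p <- x, q <- y].
Definition gcst (c : K) : grass := [:: (c, [::])].

(* (a, b, c) stands for the matrix [[a, b], [0, c]]. *)
Definition Aelt := (grass * grass * grass)%type.
Definition inA (u : Aelt) : Prop := inE0 u.1.1.
Definition Ais0 (u : Aelt) : Prop := [/\ gis0 u.1.1, gis0 u.1.2 & gis0 u.2].
Definition Aadd (u v : Aelt) : Aelt :=
  (gadd u.1.1 v.1.1, gadd u.1.2 v.1.2, gadd u.2 v.2).
Definition Amul (u v : Aelt) : Aelt :=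
  (gmul u.1.1 v.1.1, gadd (gmul u.1.1 v.1.2) (gmul u.1.2 v.2), gmul u.2 v.2).
Definition Acst (c : K) : Aelt := (gcst c, [::], gcst c).

Inductive term : Type :=
| Var of nat
| Cst of K
| Add of term & term
| Mul of term & term.

Fixpoint evalA (ev : nat -> Aelt) (t : term) : Aelt :=
  match t with
  | Var i => ev i
  | Cst c => Acst c
  | Add a b => Aadd (evalA ev a) (evalA ev b)
  | Mul a b => Amul (evalA ev a) (evalA ev b)
  end.

Definition inTA (t : term) : Prop :=
  forall ev : nat -> Aelt, (forall i, inA (ev i)) -> Ais0 (evalA ev t).

Fixpoint vars_lt (n : nat) (t : term) : bool :=
  match t with
  | Var i => (i < n)%N
  | Cst _ => true
  | Add a b | Mul a b => vars_lt n a && vars_lt n b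
  end.

Fixpoint subst (s : nat -> term) (t : term) : term :=
  match t with
  | Var i => s i
  | Cst c => Cst c
  | Add a b => Add (subst s a) (subst s b)
  | Mul a b => Mul (subst s a) (subst s b)
  end.

(* f is a polynomial identity of F_n(A) = K<x_1..x_n>/(K<x_1..x_n> ∩ T(A)):
   every substitution of the variables by elements of F_n(A) (i.e. classes
   of polynomials in x_1..x_n) gives 0, i.e. the substituted polynomial
   lies in T(A). *)
Definition PI_relfree (n : nat) (f : term) : Prop :=
  forall s : nat -> term, (forall i, vars_lt n (s i)) -> inTA (subst s f).

Definition tcomm (a b : term) : term := Add (Mul a b) (Mul (Cst (-1)) (Mul b a)).
Definition tsum (l : seq term) : term := foldr Add (Cst 0) l.
Definition tprod (l : seq term) : term := foldr Mul (Cst 1) l.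

(* variables are 0-indexed: Var i stands for x_{i+1} *)
Definition f3 (m n : nat) : term :=
  tsum [seq Mul (Cst ((-1) ^+ odd_perm s))
          (Mul (iter (m - n - 1) (fun u => tcomm u (Var 0))
                     (Var (s (inord 0))))
               (tprod [seq tcomm (Var (s (inord (2 * j + 1))))
                                 (Var (s (inord (2 * j + 2))))
                      | j <- iota 0 n./2]))
       | s <- enum {perm 'I_n.+1}].

End Defs.

From mathcomp Require Import all_boot all_order all_algebra all_fingroup.
From mathcomp Require Import ring zify.
(* Substitute x_i := x_i for i <= n and x_{n+1} := x_1 x_2, evaluate x_i at the
   matrix [[δ_{i1}, δ_{i2}], [0, e_i]] of A, and look at the coefficient of
   e_1 ... e_n in the (1,2)-entry.  Commutators have (1,1)-entry 0 because E_0
   is commutative, so for each σ this coefficient comes from the (1,2)-entry of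
   the long commutator times the (2,2)-entry of the product of the short ones,
   in which [x_a, x_b] becomes e_a e_b - e_b e_a = 2 e_a e_b.  If σ(1) = 1 the
   long commutator vanishes; if σ(1) is neither 1 nor n+1, both x_1 and x_1 x_2
   feed the short commutators and e_1 occurs twice; if σ(1) = n+1 the long
   commutator contributes (-1)^(m-n-1) and the short ones 2^(n/2) sgn(σ).  The
   coefficient is thus n! (-1)^(m-n-1) 2^(n/2), nonzero in characteristic 0. *)

Set Implicit Arguments. Unset Strict Implicit. Unset Printing Implicit Defensive.
Import GRing.Theory.
Local Open Scope ring_scope.

Section GrassPairing.
Variable K : fieldType.
Implicit Types (x y : grass K) (f g h : seq nat -> K) (c : K) (v w : seq nat).

Definition gpair x f : K := \sum_(p <- x) f p.2 * p.1.

Lemma gpair_nil f : gpair [::] f = 0.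
Proof. by rewrite /gpair big_nil. Qed.

Lemma gpair_cons c w x f : gpair ((c, w) :: x) f = f w * c + gpair x f.
Proof. by rewrite /gpair big_cons. Qed.

Lemma gpair_cat x y f : gpair (x ++ y) f = gpair x f + gpair y f.
Proof. by rewrite /gpair big_cat. Qed.

Lemma gpair_gadd x y f : gpair (gadd x y) f = gpair x f + gpair y f.
Proof. exact: gpair_cat. Qed.

Lemma eq_gpair x f g : f =1 g -> gpair x f = gpair x g.
Proof. by move=> fg; apply: eq_bigr => p _; rewrite fg. Qed.

Lemma gpair0 x f : f =1 (fun=> 0) -> gpair x f = 0.
Proof. by move=> f0; rewrite /gpair big1 // => p _; rewrite f0 mul0r. Qed.

Lemma gpairZ x f c : gpair x (fun w => c * f w) = c * gpair x f.
Proof. by rewrite /gpair mulr_sumr; apply: eq_bigr => p _; rewrite mulrA. Qed.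

Lemma gpair_gmul x y f :
  gpair (gmul x y) f = gpair x (fun w => gpair y (fun v => f (w ++ v))).
Proof.
elim: x => [|[c w] x IHx]; first by rewrite !gpair_nil.
rewrite /gmul /= gpair_cat -/(gmul x y) IHx gpair_cons; congr (_ + _).
by rewrite /gpair big_map mulr_suml; apply: eq_bigr => q _ /=; ring.
Qed.

Lemma gpair_gmul_cstl c y f : gpair (gmul (gcst c) y) f = gpair y f * c.
Proof. by rewrite gpair_gmul gpair_cons gpair_nil addr0. Qed.

Lemma gpair_gmul_monor c v x f :
  gpair (gmul x [:: (c, v)]) f = gpair x (fun w => f (w ++ v)) * c.
Proof.
rewrite gpair_gmul mulrC -gpairZ; apply: eq_gpair => w.
by rewrite gpair_cons gpair_nil addr0 mulrC.
Qed.

Lemma gpair_gmul_cstr c x f : gpair (gmul x (gcst c)) f = gpair x f * c.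
Proof. by rewrite gpair_gmul_monor; congr (_ * _); apply: eq_gpair => w; rewrite cats0. Qed.

Lemma gpair_gmul_nill y f : gpair (gmul [::] y) f = 0.
Proof. by rewrite gpair_gmul gpair_nil. Qed.

Lemma gpair_gmul_nilr x f : gpair (gmul x [::]) f = 0.
Proof. by rewrite gpair_gmul; apply: gpair0 => w; rewrite gpair_nil. Qed.

Definition wcoef S w : K :=
  if uniq w && (sort leq w == S) then (-1) ^+ ninv w else 0.

Lemma gcoefE x S : gcoef x S = gpair x (wcoef S).
Proof.
rewrite /gcoef /gpair big_mkcond; apply: eq_bigr => p _; rewrite /wcoef.
by case: ifP => _; rewrite ?mul0r.
Qed.

Lemma wcoef_nuniq S w : ~~ uniq w -> wcoef S w = 0.
Proof. by rewrite /wcoef => /negbTE ->. Qed.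

Lemma wcoef_perm_eq S w : uniq S -> sorted leq S -> perm_eq w S ->
  wcoef S w = (-1) ^+ ninv w.
Proof.
move=> S_uniq S_sorted wS; rewrite /wcoef (perm_uniq wS) S_uniq.
have -> : sort leq w = sort leq S by apply/(perm_sortP leq_total leq_trans anti_leq).
by rewrite sorted_sort ?eqxx //; apply: leq_trans.
Qed.

Definition alternating (h : seq nat -> K) :=
  forall v w a b, h (v ++ a :: b :: w) = - h (v ++ b :: a :: w).

Lemma alternating_catl h u : alternating h -> alternating (fun w => h (u ++ w)).
Proof. by move=> h_alt v w a b; rewrite !catA h_alt. Qed.

End GrassPairing.

(* Otherwise simplification and rewriting unfold [gmul] on literal lists. *)
Opaque gmul.

Lemma gpair_tsum_12 (K : fieldType) ev sigma (l : seq (term K)) f :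
  gpair (evalA ev (subst sigma (tsum l))).1.2 f =
  \sum_(t <- l) gpair (evalA ev (subst sigma t)).1.2 f.
Proof.
elim: l => [|t l IHl]; first by rewrite big_nil /= gpair_nil.
by rewrite big_cons /= gpair_gadd IHl.
Qed.

Lemma perm_swap_adj (v w : seq nat) a b :
  perm_eq (v ++ a :: b :: w) (v ++ b :: a :: w).
Proof. by rewrite perm_cat2l; apply/seq.permP => p /=; rewrite addnCA. Qed.

Lemma odd_ninv_swap (v w : seq nat) a b : a != b ->
  odd (ninv (v ++ a :: b :: w)) = ~~ odd (ninv (v ++ b :: a :: w)).
Proof.
move=> ab; elim: v => [|c v IHv] /=; last first.
  have /seq.permP pc := perm_swap_adj v w a b.
  by rewrite (pc (fun z => z < c)%N) !oddD IHv addbN.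
rewrite !oddD; case: ltngtP ab => // _ _ /=.
all: by case: (odd (ninv w)); case: (odd (count _ w)); case: (odd (count _ w)).
Qed.

Lemma wcoef_alternating (K : fieldType) S : alternating (wcoef K S).
Proof.
move=> v w a b; have pe := perm_swap_adj v w a b; rewrite /wcoef.
have -> : sort leq (v ++ a :: b :: w) = sort leq (v ++ b :: a :: w).
  exact/(perm_sortP leq_total leq_trans anti_leq).
rewrite (perm_uniq pe); case: ifP => [/andP [u _]|_]; last by rewrite oppr0.
rewrite -signr_odd -[in RHS]signr_odd odd_ninv_swap ?signrN //.
move: u; rewrite cat_uniq /= inE.
by case/and3P => _ _ /andP [/norP [ba _] _]; rewrite eq_sym.
Qed.

Lemma ninv_bump j w : ninv (map (bump j) w) = ninv w.
Proof.
elim: w => //= x w ->; congr (_ + _)%N; rewrite count_map.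
by apply: eq_count => y /=; rewrite !ltnNge leq_bump2.
Qed.

Lemma count_lt_iota j N : (j <= N)%N -> count (fun y => y < j)%N (iota 0 N) = j.
Proof.
move=> jN; rewrite -(subnKC jN) iotaD count_cat.
rewrite (eq_in_count (a2 := predT)); last by move=> y; rewrite mem_iota.
rewrite count_predT size_iota (eq_in_count (a2 := pred0)) ?count_pred0 ?addn0 //.
by move=> y; rewrite mem_iota add0n /= => /andP [yj _]; rewrite ltnNge yj.
Qed.

Lemma perm_val_iota N (s : 'S_N) :
  perm_eq [seq val (s i) | i <- enum 'I_N] (iota 0 N).
Proof.
rewrite -val_enum_ord (map_comp val s); apply: perm_map.
apply: uniq_perm; [by rewrite map_inj_uniq ?enum_uniq //; apply: perm_inj | exact: enum_uniq|].
move=> x; rewrite mem_enum; apply/mapP; exists (s^-1 x)%g; first by rewrite mem_enum.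
by rewrite permKV.
Qed.

Lemma lift_perm_decomp N (s : 'S_N.+1) :
  exists s' : 'S_N, s = lift_perm ord0 (s ord0) s'.
Proof.
pose f (k : 'I_N) := odflt k (unlift (s ord0) (s (lift ord0 k))).
have fE k : s (lift ord0 k) = lift (s ord0) (f k).
  rewrite /f; case: unliftP => [j -> // | /perm_inj/eqP].
  by rewrite eq_sym (negbTE (neq_lift _ _)).
have f_inj : injective f.
  by move=> k1 k2 e; apply: (@lift_inj _ ord0); apply: (@perm_inj _ s); rewrite !fE e.
exists (perm f_inj); apply/permP => x; case: (unliftP ord0 x) => [k ->|->].
  by rewrite lift_perm_lift permE fE.
by rewrite lift_perm_id.
Qed.

Lemma odd_perm_ninv N (s : 'S_N) :
  odd_perm s = odd (ninv [seq val (s i) | i <- enum 'I_N]).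
Proof.
elim: N s => [|N IHN] s; first by rewrite enum_ord0 (permS0 s) odd_perm1.
have [s' ->] := lift_perm_decomp s; set j := s ord0.
have -> : [seq val (lift_perm ord0 j s' i) | i <- enum 'I_N.+1] =
    val j :: map (bump j) [seq val (s' k) | k <- enum 'I_N].
  rewrite enum_ordSl /= lift_perm_id; congr (_ :: _); rewrite -!map_comp.
  by apply: eq_map => k /=; rewrite lift_perm_lift.
rewrite odd_lift_perm /= IHN ninv_bump count_map oddD; congr (_ (+) _).
rewrite (eq_count (a2 := fun y => y < j)%N); last first.
  by move=> y /=; rewrite /bump; case: leqP => hy; rewrite ?add1n ?add0n; lia.
by rewrite (seq.permP (perm_val_iota s')) count_lt_iota // -ltnS.
Qed.

Lemma flatten_pairs_iota (G : nat -> seq nat) k j0 :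
  flatten [seq G (2 * j + 1)%N ++ G (2 * j + 2)%N | j <- iota j0 k] =
  flatten [seq G i | i <- iota (2 * j0 + 1) (2 * k)].
Proof.
elim: k j0 => [|k IHk] j0 //.
rewrite mulnS add2n /= IHk -catA.
have -> : (2 * j0 + 2 = (2 * j0 + 1).+1)%N by lia.
by have -> : (2 * j0.+1 + 1 = (2 * j0 + 1).+2)%N by lia.
Qed.

Definition xword (n i : nat) : seq nat :=
  if (i < n)%N then [:: i] else if i == n then [:: 0; 1]%N else [:: 0%N].

Definition comm_word (n : nat) (l : seq (nat * nat)) : seq nat :=
  flatten [seq xword n p.1 ++ xword n p.2 | p <- l].

Lemma xword_flatten_nuniq n tl : (0 < n)%N -> uniq tl -> 0%N \in tl -> n \in tl ->
  ~~ uniq (flatten [seq xword n i | i <- tl]).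
Proof.
move=> n0 tl_uniq tl0 tln.
have n_rem : n \in rem 0%N tl by rewrite (mem_rem_uniq _ tl_uniq) inE tln andbT -lt0n.
have tl_perm : perm_eq tl [:: 0%N, n & rem n (rem 0%N tl)].
  by apply: perm_trans (perm_to_rem tl0) _; rewrite perm_cons perm_to_rem.
by rewrite (perm_uniq (perm_flatten (perm_map (xword n) tl_perm))) /= /xword n0 ltnn eqxx.
Qed.

Section Evaluation.
Variable K : fieldType.
Implicit Types (t : term K) (g h : seq nat -> K).

Definition genA (i : nat) : Aelt K :=
  (if i == 0%N then gcst 1 else [::], if i == 1%N then gcst 1 else [::], [:: (1, [:: i])]).

Local Notation evA := (evalA genA).

Lemma genA_inA i : inA (genA i).
Proof.
move=> S oS; rewrite /genA /=; case: ifP => _; last by rewrite /gcoef big_nil.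
rewrite /gcoef big_cons big_nil /=; case: eqP => // eS.
by move: oS; rewrite -eS.
Qed.

Definition commx1 t : term K := tcomm t (Var K 0).

Lemma commx1_11 t g : gpair (evA (commx1 t)).1.1 g = 0.
Proof. by rewrite /= gpair_gadd gpair_gmul_cstr !gpair_gmul_cstl; ring. Qed.

Lemma iter_commx1_11 k t g : (0 < k)%N ->
  gpair (evA (iter k commx1 t)).1.1 g = 0.
Proof. by case: k => // k _; rewrite iterS commx1_11. Qed.

Lemma commx1_12 t g :
  gpair (evA (commx1 t)).1.2 g =
  gpair (evA t).1.2 (fun w => g (w ++ [:: 0%N])) - gpair (evA t).1.2 g.
Proof.
rewrite /= gpair_gadd gpair_gadd gpair_gmul_nilr gpair_gmul_monor gpair_gadd.
by rewrite gpair_gmul_cstl gpair_gadd gpair_gmul_cstl !gpair_gmul_nill; ring.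
Qed.

Lemma iter_commx1_x1_12 k g : gpair (evA (iter k commx1 (Var K 0))).1.2 g = 0.
Proof.
elim: k g => [|k IHk] g; first by rewrite /= gpair_nil.
by rewrite iterS commx1_12 !IHk subr0.
Qed.

(* Only the word with no e_0 survives, since g kills words containing 0. *)
Lemma iter_commx1_x1x2_12 k g : (forall w, (0 \in w)%N -> g w = 0) ->
  gpair (evA (iter k commx1 (Mul (Var K 0) (Var K 1)))).1.2 g = (-1) ^+ k * g [::].
Proof.
elim: k g => [|k IHk] g g0.
  by rewrite /= gpair_gadd gpair_gmul_cstl gpair_cons !gpair_nil; ring.
rewrite iterS commx1_12 !IHk //; last by move=> w _; rewrite g0 // mem_cat mem_seq1 eqxx orbT.
by rewrite /= (g0 [:: 0%N]) ?mem_seq1 // exprS; ring.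
Qed.

Definition xsub (n i : nat) : term K :=
  if (i < n)%N then Var K i else if i == n then Mul (Var K 0) (Var K 1) else Var K 0.

Lemma xsub_vars_lt n i : (1 < n)%N -> vars_lt n (xsub n i).
Proof. by move=> n1; rewrite /xsub; case: ifP => // _; case: ifP => _ /=; lia. Qed.

Lemma xsub_lt n i : (i < n)%N -> xsub n i = Var K i.
Proof. by rewrite /xsub => ->. Qed.

Lemma xsub_n n : xsub n n = Mul (Var K 0) (Var K 1).
Proof. by rewrite /xsub ltnn eqxx. Qed.

Lemma xsub_22 n i h : gpair (evA (xsub n i)).2 h = h (xword n i).
Proof.
rewrite /xsub /xword; case: ifP => _; first by rewrite /= gpair_cons gpair_nil mulr1 addr0.
case: ifP => _ /=; rewrite ?gpair_gmul !gpair_cons !gpair_nil; by rewrite ?mulr1 ?addr0.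
Qed.

Lemma subst_iter_commx1 n k t : (0 < n)%N ->
  subst (xsub n) (iter k commx1 t) = iter k commx1 (subst (xsub n) t).
Proof. by move=> n0; elim: k => //= k ->; rewrite /commx1 /= xsub_lt. Qed.

Definition comm_prod (l : seq (nat * nat)) : term K :=
  tprod [seq tcomm (Var K p.1) (Var K p.2) | p <- l].

Lemma comm_22 n a b h :
  gpair (evA (subst (xsub n) (tcomm (Var K a) (Var K b)))).2 h =
  h (xword n a ++ xword n b) - h (xword n b ++ xword n a).
Proof. by rewrite /= gpair_gadd gpair_gmul_cstl !gpair_gmul !xsub_22; ring. Qed.

Lemma comm_prod_22_eq0 n l h :
  (forall w, perm_eq w (comm_word n l) -> h w = 0) ->
  gpair (evA (subst (xsub n) (comm_prod l))).2 h = 0.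
Proof.
elim: l h => [|[a b] l IHl] h h0.
  by rewrite /= gpair_cons gpair_nil addr0 (h0 [::]) ?mul0r.
rewrite [evA _]/= gpair_gmul comm_22 !IHl ?subrr // => v v_perm; apply: h0;
  rewrite /comm_word /= -/(comm_word n l).
- exact: perm_cat (permEl (perm_catC _ _)) v_perm.
- by rewrite perm_cat2l.
Qed.

(* Each factor [x_a, x_b] contributes e_a e_b - e_b e_a = 2 e_a e_b. *)
Lemma comm_prod_22_alternating n l h : alternating h ->
  all (fun i => i < n)%N (flatten [seq [:: p.1; p.2] | p <- l]) ->
  gpair (evA (subst (xsub n) (comm_prod l))).2 h = 2 ^+ size l * h (comm_word n l).
Proof.
elim: l h => [|[a b] l IHl] h h_alt /=.
  by move=> _; rewrite gpair_cons gpair_nil; ring.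
case/and3P=> an bn ln; have h_catl u := alternating_catl u h_alt.
rewrite gpair_gmul comm_22 !IHl //.
rewrite /comm_word /= -/(comm_word n l) /xword an bn /= -[_ :: _]cat0s h_alt exprS; ring.
Qed.

End Evaluation.

Lemma inord0 n : inord 0 = ord0 :> 'I_n.+1.
Proof. by apply: val_inj; rewrite /= inordK. Qed.

Definition pairs_of n (s : {perm 'I_n.+1}) : seq (nat * nat) :=
  [seq (val (s (inord (2 * j + 1))), val (s (inord (2 * j + 2)))) | j <- iota 0 n./2].

Definition f3_term (K : fieldType) m n (s : {perm 'I_n.+1}) : term K :=
  Mul (Cst ((-1) ^+ odd_perm s))
      (Mul (iter (m - n - 1) (@commx1 K) (Var K (s ord0))) (comm_prod K (pairs_of s))).

Lemma f3E (K : fieldType) m n :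
  f3 K m n = tsum [seq f3_term K m s | s <- enum {perm 'I_n.+1}].
Proof.
rewrite /f3; congr tsum; apply: eq_map => s.
by rewrite inord0 /f3_term /comm_prod /pairs_of -map_comp.
Qed.

Section PermTail.
Variables (n : nat) (s : {perm 'I_n.+1}).
Hypothesis n_even : ~~ odd n.

Let twice_half : (2 * n./2)%N = n.
Proof. by rewrite mul2n even_halfK. Qed.

Definition perm_tail : seq nat := [seq val (s (inord k)) | k <- iota 1 n].

Lemma enum_perm_head_tail :
  [seq val (s i) | i <- enum 'I_n.+1] = val (s ord0) :: perm_tail.
Proof.
rewrite -inord0 [RHS](_ : _ = [seq val (s (inord k)) | k <- iota 0 n.+1]) //.
by rewrite -val_enum_ord -map_comp; apply: eq_map => i /=; rewrite inord_val.
Qed.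

Lemma perm_head_tail : perm_eq (val (s ord0) :: perm_tail) (iota 0 n.+1).
Proof. by rewrite -enum_perm_head_tail perm_val_iota. Qed.

Lemma comm_word_pairs_of :
  comm_word n (pairs_of s) = flatten [seq xword n i | i <- perm_tail].
Proof.
rewrite /comm_word /pairs_of -map_comp.
by rewrite (flatten_pairs_iota (fun k => xword n (s (inord k)))) twice_half -map_comp.
Qed.

Lemma flatten_pairs_of : flatten [seq [:: p.1; p.2] | p <- pairs_of s] = perm_tail.
Proof.
rewrite /pairs_of -map_comp.
by rewrite (flatten_pairs_iota (fun k => [:: val (s (inord k))])) twice_half flatten_map1.
Qed.

Lemma perm_tail_iota : s ord0 = ord_max -> perm_eq perm_tail (iota 0 n).
Proof.
move=> s0; rewrite -(perm_cons n); apply: perm_trans (_ : perm_eq _ (iota 0 n.+1)) _.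
  by rewrite -[n in n :: _]/(val (@ord_max n)) -s0 perm_head_tail.
by rewrite -addn1 iotaD perm_catC.
Qed.

(* The leading n contributes n inversions, an even number. *)
Lemma odd_perm_tail : s ord0 = ord_max -> odd_perm s = odd (ninv perm_tail).
Proof.
move=> s0; rewrite odd_perm_ninv enum_perm_head_tail s0 /=.
by rewrite (seq.permP (perm_tail_iota s0)) count_lt_iota // oddD (negbTE n_even).
Qed.

End PermTail.

Section TermValues.
Variables (K : fieldType) (m n : nat).
Hypotheses (n_gt1 : (1 < n)%N) (n_even : ~~ odd n) (m_ge : (n + 2 <= m)%N).
Local Notation evA := (evalA (genA K)).
Local Notation eval_term s := (gpair (evA (subst (xsub K n) (f3_term K m s))).1.2
                                     (wcoef K (iota 0 n))).

Let n_gt0 : (0 < n)%N. Proof. exact: ltnW. Qed.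

(* The long commutator has (1,1)-entry 0. *)
Lemma f3_term_12 (s : {perm 'I_n.+1}) f :
  gpair (evA (subst (xsub K n) (f3_term K m s))).1.2 f =
  (-1) ^+ odd_perm s *
  gpair (evA (iter (m - n - 1) (@commx1 K) (xsub K n (s ord0)))).1.2
    (fun w => gpair (evA (subst (xsub K n) (comm_prod K (pairs_of s)))).2
                    (fun v => f (w ++ v))).
Proof.
rewrite [in LHS]/= gpair_gadd gpair_gmul_cstl gpair_gmul_nill addr0 gpair_gadd !gpair_gmul.
by rewrite subst_iter_commx1 // iter_commx1_11 ?add0r 1?mulrC //; lia.
Qed.

Lemma f3_term_max (s : {perm 'I_n.+1}) :
  s ord0 = ord_max -> eval_term s = (-1) ^+ (m - n - 1) * 2 ^+ n./2.
Proof.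
move=> s0; have tail_iota := perm_tail_iota s0.
have tail0 : 0%N \in perm_tail s by rewrite (perm_mem tail_iota) mem_iota.
have tail_lt : all (fun i => i < n)%N (perm_tail s).
  by apply/allP => i; rewrite (perm_mem tail_iota) mem_iota.
have word_tail : comm_word n (pairs_of s) = perm_tail s.
  rewrite comm_word_pairs_of // -[RHS]flatten_seq1; congr flatten.
  by apply/eq_in_map => i /(allP tail_lt) i_lt; rewrite /xword i_lt.
rewrite f3_term_12 s0 xsub_n iter_commx1_x1x2_12; last first.
  move=> w w0; apply: comm_prod_22_eq0 => v vP; apply: wcoef_nuniq.
  rewrite cat_uniq; apply/negP => /and3P [_ /hasPn no_common _].
  by move: (no_common 0%N); rewrite (perm_mem vP) word_tail tail0 w0 => /(_ isT).
rewrite /= (comm_prod_22_alternating (h := wcoef K (iota 0 n))) ?flatten_pairs_of //;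
  last exact: wcoef_alternating.
rewrite word_tail wcoef_perm_eq ?iota_uniq ?iota_sorted //.
rewrite size_map size_iota -[(-1) ^+ ninv _]signr_odd -odd_perm_tail //.
by rewrite mulrCA [X in _ * X]mulrCA mulrA -expr2 sqrr_sign mulr1.
Qed.

Lemma f3_term_x1 (s : {perm 'I_n.+1}) : s ord0 = ord0 -> eval_term s = 0.
Proof. by move=> s0; rewrite f3_term_12 s0 xsub_lt // iter_commx1_x1_12 mulr0. Qed.

(* Both indices 0 and n then occur in the short commutators, and both
   substitute a word containing the generator 0. *)
Lemma f3_term_other (s : {perm 'I_n.+1}) :
  s ord0 != ord0 -> s ord0 != ord_max -> eval_term s = 0.
Proof.
move=> s0_ne0 s0_neN; have tail_perm := perm_head_tail s.
have tail_uniq : uniq (perm_tail s).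
  by move: (perm_uniq tail_perm); rewrite iota_uniq => /andP [].
have in_tail i : (i <= n)%N -> i != s ord0 -> i \in perm_tail s.
  move=> i_le i_ne; move: (mem_iota 0 n.+1 i).
  by rewrite -(perm_mem tail_perm) inE (negbTE i_ne) /= ltnS i_le.
have word_nuniq : ~~ uniq (comm_word n (pairs_of s)).
  rewrite comm_word_pairs_of // xword_flatten_nuniq // in_tail //.
  - by apply: contra s0_ne0 => /eqP z_s0; apply/eqP/ord_inj; rewrite -z_s0.
  - by apply: contra s0_neN => /eqP n_s0; apply/eqP/ord_inj; rewrite -n_s0.
rewrite f3_term_12 gpair0 ?mulr0 // => w; apply: comm_prod_22_eq0 => v vP.
by rewrite wcoef_nuniq // cat_uniq (perm_uniq vP) (negbTE word_nuniq) !andbF.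
Qed.

Lemma f3_term_value (s : {perm 'I_n.+1}) :
  eval_term s = if s ord0 == ord_max then (-1) ^+ (m - n - 1) * 2 ^+ n./2 else 0.
Proof.
case: eqP => [|/eqP s0_neN]; first exact: f3_term_max.
by have [/f3_term_x1|/f3_term_other] := eqVneq (s ord0) ord0; apply.
Qed.

End TermValues.

Theorem lemma3p7 (K : fieldType) (charK0 : [pchar K]%R =i pred0)
  (n m : nat) (n_ge2 : (2 <= n)%N) (n_even : ~~ odd n) (m_ge : (n + 2 <= m)%N) :
  ~ PI_relfree n (f3 K m n).
Proof.
move=> f3_PI.
have [_ f3_12 _] := f3_PI _ (fun i => xsub_vars_lt K i n_ge2) _ (genA_inA K).
move: (f3_12 (iota 0 n)); rewrite gcoefE f3E gpair_tsum_12 big_map.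
rewrite (eq_bigr _ (fun s _ => @f3_term_value K m n n_ge2 n_even m_ge s)).
rewrite big_enum -big_mkcond sumr_const -[_ *+ #|_|]mulr_natr; apply/eqP.
rewrite !mulf_eq0 signr_eq0 expf_eq0 !(pcharf0P K).1 // andbF /= -lt0n.
by apply/card_gt0P; exists (tperm ord0 ord_max); rewrite unfold_in /= tpermL eqnE.
Qed.
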